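(* Let $f:Y\to X$ be a covering of finite connected graphs. Consider the exact sequences \[ 0\to\mathbb{Z}\xrightarrow{\iota_Y}\mathrm{Div}(Y)\xrightarrow{\mathcal{L}_Y}\mathrm{Div}(Y)\to\mathrm{Pic}(Y)\to0 \] and \[ 0\to\mathbb{Z}\xrightarrow{\iota_X}\mathrm{Div}(X)\xrightarrow{\mathcal{L}_X}\mathrm{Div}(X)\to\mathrm{Pic}(X)\to0. \] The vertical maps are multiplication by $[Y:X]$ on $\mathbb{Z}$, $f_{\mathsf r}$ on the first $\mathrm{Div}$, $f_*$ on the second $\mathrm{Div}$, and the map $\mathrm{Pic}(Y)\to\mathrm{Pic}(X)$ induced by $f_*$. These vertical maps make the resulting diagram commute. Explicitly, $f_{\mathsf r}\circ\iota_Y=[Y:X]\,\iota_X$ and $f_*\circ\mathcal{L}_Y=\mathcal{L}_X\circ f_{\mathsf r}$. Moreover, $f_*$ and the induced map $\mathrm{Pic}(Y)\to\mathrm{Pic}(X)$ are surjective.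
   Context: A finite graph $X$ consists of a finite vertex set $V_X$, a finite edge set $\mathbb{E}_X$, a fixed-point-free involution $e\mapsto\bar e$, and maps $s,t:\mathbb{E}_X\to V_X$ with $s(\bar e)=t(e)$ and $t(\bar e)=s(e)$. $\mathbb{E}_{X,v}=\{e\in\mathbb{E}_X: s(e)=v\}$. A morphism $f:Y\to X$ consists of maps $f_V$, $f_{\mathbb{E}}$ compatible with $s$, $t$ and the involution. It is a covering if for each $w\in V_Y$ there is a positive integer $m_w(f)$ such that $f_{\mathbb{E}}:\mathbb{E}_{Y,w}\to\mathbb{E}_{X,f_V(w)}$ is $m_w(f)$-to-one. The degree is $[Y:X]=\sum_{w\in f_V^{-1}(v)}m_w(f)$, which is independent of $v\in V_X$ when $X$ is connected. $\mathrm{Div}(X)=\bigoplus_{v\in V_X}\mathbb{Z}[v]$. The Laplacian $\mathcal{L}_X:\mathrm{Div}(X)\to\mathrm{Div}(X)$ is $\mathcal{L}_X([v])=\sum_{e\in\mathbb{E}_{X,v}}([v]-[t(e)])$, and $\mathrm{Pic}(X)=\mathrm{coker}\,\mathcal{L}_X$. The map $\iota_X:\mathbb{Z}\to\mathrm{Div}(X)$ sends $1$ to $\sum_{v\in V_X}[v]$, and for connected $X$ the displayed rows are exact. The homomorphisms $f_*,f_{\mathsf r}:\mathrm{Div}(Y)\to\mathrm{Div}(X)$ are defined by $f_*([w])=[f_V(w)]$ and $f_{\mathsf r}([w])=m_w(f)[f_V(w)]$. *)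

From HB Require Import structures.
From mathcomp Require Import all_boot all_order all_algebra.
Set Implicit Arguments. Unset Strict Implicit. Unset Printing Implicit Defensive.
Import Order.TTheory GRing.Theory Num.Theory.
Local Open Scope ring_scope.

(* A finite graph in Serre's sense. *)
Record graph := Graph {
  V : finType;
  E : finType;
  einv : E -> E;
  src : E -> V;
  tgt : E -> V;
  einvK : forall e, einv (einv e) = e;
  einv_nofix : forall e, einv e != e;
  src_inv : forall e, src (einv e) = tgt e;
  tgt_inv : forall e, tgt (einv e) = src e
}.

Definition adj (X : graph) : rel (V X) :=
  fun u v => [exists e : E X, (src e == u) && (tgt e == v)].

Definition connected_graph (X : graph) : Prop :=
  (0 < #|V X|)%N /\ forall u v : V X, connect (@adj X) u v.

Record morphism (Y X : graph) := Morphism {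
  fV : V Y -> V X;
  fE : E Y -> E X;
  fsrc : forall e, fV (src e) = src (fE e);
  ftgt : forall e, fV (tgt e) = tgt (fE e);
  finv : forall e, fE (einv e) = einv (fE e)
}.

Definition is_covering (Y X : graph) (f : morphism Y X) (m : V Y -> nat) : Prop :=
  forall w : V Y, (0 < m w)%N /\
    forall e' : E X, src e' = fV f w ->
      #|[set e : E Y | (src e == w) && (fE f e == e')]| = m w.

Definition cov_degree (Y X : graph) (f : morphism Y X) (m : V Y -> nat) (v : V X) : nat :=
  (\sum_(w : V Y | fV f w == v) m w)%N.

Definition Div (X : graph) := {ffun V X -> int}.

Definition dunit (X : graph) (v : V X) : Div X := [ffun x => ((x == v) : nat)%:Z].

Definition laplacian (X : graph) (D : Div X) : Div X :=
  \sum_(v : V X) (\sum_(e : E X | src e == v) (dunit v - dunit (tgt e))) *~ (D v).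

Definition iota_div (X : graph) (n : int) : Div X := (\sum_(v : V X) dunit v) *~ n.

Definition push (Y X : graph) (f : morphism Y X) (D : Div Y) : Div X :=
  \sum_(w : V Y) dunit (fV f w) *~ (D w).

Definition pushr (Y X : graph) (f : morphism Y X) (m : V Y -> nat) (D : Div Y) : Div X :=
  \sum_(w : V Y) dunit (fV f w) *~ (D w * (m w)%:Z).

From Pilot Require Import Defs.
From HB Require Import structures.
From mathcomp Require Import all_boot all_order all_algebra.
Set Implicit Arguments.
Unset Strict Implicit.
Unset Printing Implicit Defensive.
Import Order.TTheory GRing.Theory Num.Theory.
Local Open Scope ring_scope.

(* All maps between divisor groups are Z-linear, so both commuting squares
   reduce to the unit divisors [w].  There the middle square says that the
   m_w-to-one map from the edges at w onto the edges at f(w) carries the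
   Laplacian star of w onto m_w copies of the star of f(w).  The degree
   sum_(f(w) = v) m_w is the number of lifts of any edge leaving v; the edge
   involution makes it equal at both ends of an edge, so by connectedness it is
   constant.  Being positive, every fibre of f_V is nonempty, so f_* (and hence
   the induced map on Picard groups) is onto. *)

Section DivisorExtension.
Variables Y X : graph.

Definition divext (h : V Y -> Div X) (D : Div Y) : Div X := \sum_w h w *~ D w.

Fact divext_is_zmod_morphism h : zmod_morphism (divext h).
Proof.
move=> D1 D2; rewrite /divext -sumrB.
by apply: eq_bigr => w _; rewrite !ffunE mulrzBr.
Qed.

HB.instance Definition _ h :=
  GRing.isZmodMorphism.Build (Div Y) (Div X) (divext h)
    (divext_is_zmod_morphism h).

Lemma divext_dunit h w : divext h (dunit w) = h w.
Proof.
rewrite /divext (bigD1 w) //= big1 ?addr0 => [|u /negbTE nuw].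
  by rewrite ffunE eqxx.
by rewrite ffunE nuw mulr0z.
Qed.

End DivisorExtension.

Lemma divext_dunit_id (X : graph) (D : Div X) : divext (@dunit X) D = D.
Proof.
apply/ffunP => v; rewrite sum_ffunE (bigD1 v) //= big1 ?addr0 => [|u nuv].
  by rewrite ffunMzE ffunE eqxx mulrzz mul1r.
by rewrite ffunMzE ffunE eq_sym (negbTE nuv) mulrzz mul0r.
Qed.

Lemma eq_additive_dunit (Y X : graph) (F G : {additive Div Y -> Div X}) :
  (forall w, F (dunit w) = G (dunit w)) -> F =1 G.
Proof.
move=> FG D; rewrite -(divext_dunit_id D) /divext !raddf_sum.
by apply: eq_bigr => w _; rewrite !raddfMz FG.
Qed.

Lemma iota_divE (X : graph) (n : int) (v : V X) : iota_div X n v = n.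
Proof.
rewrite /iota_div ffunMzE sum_ffunE (bigD1 v) //= big1 => [|u nuv].
  by rewrite ffunE eqxx addr0 mulrzz mul1r.
by rewrite ffunE eq_sym (negbTE nuv).
Qed.

HB.instance Definition _ (X : graph) :=
  GRing.isZmodMorphism.Build (Div X) (Div X) (@laplacian X)
    (divext_is_zmod_morphism _).

Lemma laplacian_dunit (X : graph) (v : V X) :
  laplacian (dunit v) = \sum_(e : E X | src e == v) (dunit v - dunit (tgt e)).
Proof. exact: divext_dunit. Qed.

Section Pushforward.
Variables (Y X : graph) (f : morphism Y X) (m : V Y -> nat).

HB.instance Definition _ :=
  GRing.isZmodMorphism.Build (Div Y) (Div X) (push f)
    (divext_is_zmod_morphism _).

Lemma push_dunit w : push f (dunit w) = dunit (fV f w).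
Proof. exact: divext_dunit. Qed.

Lemma pushrE : pushr f m =1 divext (fun w => dunit (fV f w) *+ m w).
Proof. by move=> D; apply: eq_bigr => w _; rewrite -mulrzA_C -pmulrn. Qed.

Fact pushr_is_zmod_morphism : zmod_morphism (pushr f m).
Proof. by move=> D1 D2; rewrite !pushrE raddfB. Qed.

HB.instance Definition _ :=
  GRing.isZmodMorphism.Build (Div Y) (Div X) (pushr f m) pushr_is_zmod_morphism.

Lemma pushr_dunit w : pushr f m (dunit w) = dunit (fV f w) *+ m w.
Proof. by rewrite pushrE divext_dunit. Qed.

Lemma push_surj :
  (forall v, exists w, fV f w = v) -> forall D, exists D', push f D' = D.
Proof.
move=> /fin_all_exists[s sK] D; exists (divext (fun v => dunit (s v)) D).
rewrite -[RHS]divext_dunit_id /divext raddf_sum.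
by apply: eq_bigr => v _; rewrite raddfMz /= push_dunit sK.
Qed.

End Pushforward.

Lemma connected_graph_const (X : graph) (T : eqType) (g : V X -> T) :
  connected_graph X -> (forall e, g (src e) = g (tgt e)) -> forall u v, g u = g v.
Proof.
move=> [_ conn] g_edge u v.
have g_closed : closed (@adj X) [pred x | g x == g u].
  by move=> x y /existsP[e /andP[/eqP <- /eqP <-]]; rewrite !inE g_edge.
by have := closed_connect g_closed (conn u v); rewrite !inE eqxx => /esym/eqP.
Qed.

Section Covering.
Variables (Y X : graph) (f : morphism Y X) (m : V Y -> nat).
Hypothesis f_cov : is_covering f m.

Lemma sum_out_edges_covering (M : nmodType) (G : E X -> M) w :
  \sum_(e | src e == w) G (fE f e) = (\sum_(e' | src e' == fV f w) G e') *+ m w.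
Proof.
rewrite (partition_big (fE f) (fun e' => src e' == fV f w)); last first.
  by move=> e /eqP <-; rewrite fsrc.
rewrite -sumrMnl; apply: eq_bigr => e' /eqP e'_w.
rewrite (eq_bigr (fun _ => G e')) => [|e /andP[_ /eqP ->] //].
rewrite sumr_const -(proj2 (f_cov w) e' e'_w).
by congr (_ *+ _); apply: eq_card => e; rewrite inE.
Qed.

Lemma push_laplacian D : push f (laplacian D) = laplacian (pushr f m D).
Proof.
apply: (@eq_additive_dunit _ _ (push f \o @laplacian Y)
                               (@laplacian X \o pushr f m)) => w /=.
rewrite pushr_dunit raddfMn /= !laplacian_dunit raddf_sum /=.
under eq_bigr => e /eqP e_w do
  rewrite raddfB /= !push_dunit -[in dunit (fV f w)]e_w fsrc ftgt.
rewrite (sum_out_edges_covering (fun e' => dunit (src e') - dunit (tgt e'))).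
by congr (_ *+ _); apply: eq_bigr => e' /eqP ->.
Qed.

Lemma cov_degree_src e' : cov_degree f m (src e') = #|[set e | fE f e == e']|.
Proof.
rewrite /cov_degree -sum1_card.
rewrite (partition_big (@src Y) (fun w => fV f w == src e')).
  apply: eq_bigr => w /eqP w_e'.
  rewrite -(proj2 (f_cov w) e' (esym w_e')) -sum1_card.
  by apply: eq_bigl => e; rewrite !inE andbC.
by move=> e; rewrite inE => /eqP <-; rewrite fsrc.
Qed.

Lemma cov_degree_tgt e' : cov_degree f m (tgt e') = cov_degree f m (src e').
Proof.
rewrite -src_inv !cov_degree_src -(card_preimset _ (can_inj (@einvK Y))).
apply: eq_card => e; rewrite !inE Defs.finv.
exact: (inj_eq (can_inj (@einvK X))).
Qed.

Lemma cov_degree_const :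
  connected_graph X -> forall u v, cov_degree f m u = cov_degree f m v.
Proof.
by move=> X_conn; apply: connected_graph_const => // e; rewrite cov_degree_tgt.
Qed.

Lemma pushr_iota_div (n : int) (v : V X) :
  pushr f m (iota_div Y n) v = n * (cov_degree f m v)%:Z.
Proof.
rewrite raddfMz raddf_sum /= ffunMzE sum_ffunE mulrzz mulrC /cov_degree.
rewrite (big_morph Posz PoszD (erefl _)); congr (_ * _).
rewrite [RHS]big_mkcond /=; apply: eq_bigr => w _.
rewrite pushr_dunit ffunMnE ffunE eq_sym.
by case: (_ == v); rewrite ?mul0rn ?natz.
Qed.

Lemma covering_surjV :
  connected_graph Y -> connected_graph X -> forall v, exists w, fV f w = v.
Proof.
move=> [/card_gt0P[w0 _] _] X_conn v.
have : (0 < cov_degree f m v)%N.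
  rewrite (cov_degree_const X_conn v (fV f w0)) /cov_degree (bigD1 w0) //=.
  exact: ltn_addr (proj1 (f_cov w0)).
rewrite /cov_degree; case: (pickP (fun w => fV f w == v)) => [w /eqP|no_w].
  by exists w.
by rewrite big_pred0.
Qed.

End Covering.

Theorem proposition3p1 (Y X : graph) (f : morphism Y X) (m : V Y -> nat) :
  connected_graph Y -> connected_graph X -> is_covering f m ->
  (* left square: f_r o iota_Y = [Y:X] iota_X  (with [Y:X] computed at any vertex) *)
  (forall (v0 : V X) (n : int),
      pushr f m (iota_div Y n) = iota_div X (n * (cov_degree f m v0)%:Z)) /\
  (* middle square: f_* o L_Y = L_X o f_r *)
  (forall D : Div Y, push f (laplacian D) = laplacian (pushr f m D)) /\
  (* f_* maps im L_Y into im L_X, so it induces Pic(Y) -> Pic(X) *)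
  (forall D : Div Y, exists C : Div X, push f (laplacian D) = laplacian C) /\
  (* f_* is surjective *)
  (forall D : Div X, exists D' : Div Y, push f D' = D) /\
  (* the induced map Pic(Y) -> Pic(X) is surjective *)
  (forall D : Div X, exists (D' : Div Y) (C : Div X), push f D' - D = laplacian C).
Proof.
move=> Y_conn X_conn f_cov.
have push_onto := push_surj (covering_surjV f_cov Y_conn X_conn).
split; [|split; [|split; [|split]]].
- move=> v0 n; apply/ffunP => v.
  by rewrite pushr_iota_div iota_divE (cov_degree_const f_cov X_conn v v0).
- exact: push_laplacian.
- by move=> D; exists (pushr f m D); apply: push_laplacian.
- exact: push_onto.
- move=> D; have [D' <-] := push_onto D.
  by exists D', 0; rewrite subrr raddf0.
Qed.
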